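(* Let $V$ be a finite nonempty set and $ij\in P_V$. For every $x\in X_V$, the vector $x'\in\{0,1\}^{P_V}$ defined for all $pq\in P_V$ by $x'_{pq}=1$ if $x_{pi}=x_{jq}=1$, and $x'_{pq}=x_{pq}$ otherwise, satisfies $x'\in X_V$.
   Context: $P_V=\{pq\in V^2\mid p\neq q\}$. $X_V$ is the set of all $x\in\{0,1\}^{P_V}$ such that $x_{pq}+x_{qr}-x_{pr}\le 1$ for all pairwise distinct $p,q,r\in V$. Convention: for $x\in X_V$ and $a\in V$, $x_{aa}:=1$ (so, e.g., $x_{pi}=1$ holds when $p=i$). *)

From mathcomp Require Import all_boot.
Set Implicit Arguments. Unset Strict Implicit. Unset Printing Implicit Defensive.

(* A vector x in {0,1}^{P_V} is represented as a function x : V -> V -> bool;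
   its values on the diagonal (p = p) are irrelevant and never used. *)

Definition xval (V : finType) (x : V -> V -> bool) (p q : V) : bool :=
  if p == q then true else x p q.

Definition in_XV (V : finType) (x : V -> V -> bool) : Prop :=
  forall p q r : V, p != q -> q != r -> p != r ->
    (x p q + x q r <= 1 + x p r)%N.

Definition xprime (V : finType) (i j : V) (x : V -> V -> bool) (p q : V) : bool :=
  if xval x p i && xval x j q then true else x p q.

(* With the convention x_aa = 1, membership in X_V says exactly that x is a
   transitive relation. The vector x' is x enlarged by the rectangle
   {p | x_pi = 1} * {q | x_jq = 1}, whose first side is down-closed and second
   side up-closed for x; adding such a rectangle to a transitive relation keeps it
   transitive. *)

From mathcomp Require Import all_boot.

Lemma in_XVP (V : finType) (x : V -> V -> bool) :
  in_XV x <-> transitive (xval x).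
Proof.
rewrite /in_XV /xval; split=> [hx q p r | trx p q r pq qr pr].
- case: (eqVneq p q) => [-> _ //|pq] xpq; case: (eqVneq q r) => [<- _|qr xqr].
    by rewrite (negbTE pq).
  case: (eqVneq p r) => [//|pr].
  by move: (hx p q r pq qr pr); rewrite xpq xqr; case: (x p r).
- have := trx q p r; rewrite (negbTE pq) (negbTE qr) (negbTE pr).
  by case: (x p q); case: (x q r); case: (x p r) => // /(_ isT isT).
Qed.

Lemma xval_xprime (V : finType) (i j : V) (x : V -> V -> bool) (p q : V) :
  xval (xprime i j x) p q = (xval x p i && xval x j q) || xval x p q.
Proof. by rewrite /xprime /xval; case: eqP => _; case: (_ && _). Qed.

Lemma transitive_rectU {T : Type} {R : rel T} {a b : pred T} :
  transitive R ->
  (forall p q, R p q -> a q -> a p) -> (forall p q, R p q -> b p -> b q) ->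
  transitive (fun p q => a p && b q || R p q).
Proof.
move=> trR a_down b_up q p r /orP[/andP[ap bq] | Rpq] /orP[/andP[aq br] | Rqr].
- by rewrite ap br.
- by rewrite ap (b_up q r).
- by rewrite (a_down p q) // br.
- by rewrite (trR q p r Rpq Rqr) orbT.
Qed.

Theorem lemma5p4 (V : finType) (v0 : V) (i j : V) (hij : i != j)
  (x : V -> V -> bool) (hx : in_XV x) :
  in_XV (xprime i j x).
Proof.
move/in_XVP: hx => trx; apply/in_XVP => q p r; rewrite !xval_xprime.
have i_down p' q' : xval x p' q' -> xval x q' i -> xval x p' i by apply: trx.
have j_up p' q' : xval x p' q' -> xval x j p' -> xval x j q'.
  by move=> xpq xjp; apply: trx xjp xpq.
exact: (transitive_rectU trx i_down j_up).
Qed.
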